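(* Let $A\in\mathbb{R}^{nm\times nm}$ be symmetric with eigenvalues $\lambda_1\le\lambda_2\le\dots\le\lambda_{nm}$, let $x=\operatorname{vec}(X)$ with $\|x\|=1$ and thin SVD $X=USV^\top$ ($U^\top U=I_r$, $V^\top V=I_r$, $S$ diagonal positive), and let $C=A-\mathfrak{R}(x)I_{nm}$ with $\mathfrak{R}(x)=x^\top Ax$. Then for every nonzero $\tau\in\mathbb{R}^{nr+mr+r^2}$ with $B^\top\tau=0$: (i) $z=E\tau$ is nonzero, orthogonal to $x$, satisfies $\|z\|=\|\tau\|$, and $\tau^\top C_{\mathrm{loc}}\tau=z^\top Cz$; consequently \[ \frac{\tau^\top C_{\mathrm{loc}}\tau}{\tau^\top\tau}\in\Big[\min_{z\perp x,\,z\ne0}\frac{z^\top Cz}{z^\top z},\ \max_{z\perp x,\,z\ne0}\frac{z^\top Cz}{z^\top z}\Big]; \] (ii) $\tau^\top C_{\mathrm{loc}}\tau\ge(\lambda_1+\lambda_2-2\mathfrak{R}(x))\,\|\tau\|^2$. In particular, if $\mathfrak{R}(x)<(\lambda_1+\lambda_2)/2$, then $C_{\mathrm{loc}}$ is positive definite on the subspace $\{\tau: B^\top\tau=0\}$, and the condition number of $(I-BB^\top)C_{\mathrm{loc}}(I-BB^\top)$ restricted to this subspace is at most $\dfrac{\max_{z\perp x,z\ne0} z^\top Cz/z^\top z}{\min_{z\perp x,z\ne0} z^\top Cz/z^\top z}$.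
   Context: $\operatorname{vec}$ is columnwise reshaping. Define $E_v=V\otimes I_n$, $E_u=I_m\otimes U$, $E_{vu}=V\otimes U$, the $nm\times(nr+mr+r^2)$ matrix $E=[E_v\ E_u\ E_{vu}]$ (so $E\,(\operatorname{vec}(U_z),\operatorname{vec}(V_z^\top),\operatorname{vec}(S_z))=\operatorname{vec}(U_zV^\top+UV_z^\top+US_zV^\top)$), and for $M\in\mathbb{R}^{nm\times nm}$, $a,b\in\{v,u,vu\}$, $M_{a,b}=E_a^\top ME_b$. The local matrix is $C_{\mathrm{loc}}=E^\top CE=[C_{a,b}]_{a,b\in\{v,u,vu\}}$. Further \[ B=\begin{bmatrix} I_r\otimes U&0&0\\ 0&V\otimes I_r&0\\ 0&0&\operatorname{vec}(S)\end{bmatrix}, \] so that for $\tau=(\operatorname{vec}(U_z),\operatorname{vec}(V_z^\top),\operatorname{vec}(S_z))$ the condition $B^\top\tau=0$ means $U^\top U_z=0$, $V^\top V_z=0$, $\operatorname{vec}(S)^\top\operatorname{vec}(S_z)=0$. *)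

From HB Require Import structures.
From mathcomp Require Import all_boot all_order all_algebra.
Set Implicit Arguments. Unset Strict Implicit. Unset Printing Implicit Defensive.
Import Order.TTheory GRing.Theory Num.Theory.
Local Open Scope ring_scope.

Section Defs.
Variable R : rcfType.

(* Index splitting for 'I_(p*q): k <-> (k1,k2) with k = k1*q + k2
   (this is MathComp's mxvec_index ordering). *)
Definition split_idx (p q : nat) (k : 'I_(p * q)) : 'I_p * 'I_q :=
  enum_val (cast_ord (esym (mxvec_cast p q)) k).

(* Kronecker product: (P (x) Q)_{(i1 p2 + i2),(j1 q2 + j2)} = P_{i1 j1} Q_{i2 j2}. *)
Definition kron (p1 q1 p2 q2 : nat) (P : 'M[R]_(p1, q1)) (Q : 'M[R]_(p2, q2))
  : 'M[R]_(p1 * p2, q1 * q2) :=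
  \matrix_(i, j) (P (split_idx i).1 (split_idx j).1 * Q (split_idx i).2 (split_idx j).2).

(* Columnwise vectorization: vec X at index j*n + i is X i j. *)
Definition vec (n m : nat) (X : 'M[R]_(n, m)) : 'cV[R]_(m * n) := (mxvec X^T)^T.

Definition dot (k : nat) (u v : 'cV[R]_k) : R := (u^T *m v) 0 0.
Definition qform (k : nat) (M : 'M[R]_k) (v : 'cV[R]_k) : R := (v^T *m M *m v) 0 0.
Definition vnorm (k : nat) (v : 'cV[R]_k) : R := Num.sqrt (dot v v).

Definition is_min_rq (k : nat) (C : 'M[R]_k) (x : 'cV[R]_k) (lo : R) : Prop :=
  (exists2 z : 'cV[R]_k, (z != 0) && (dot z x == 0) & qform C z / dot z z = lo) /\
  (forall z : 'cV[R]_k, z != 0 -> dot z x = 0 -> lo <= qform C z / dot z z).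
Definition is_max_rq (k : nat) (C : 'M[R]_k) (x : 'cV[R]_k) (hi : R) : Prop :=
  (exists2 z : 'cV[R]_k, (z != 0) && (dot z x == 0) & qform C z / dot z z = hi) /\
  (forall z : 'cV[R]_k, z != 0 -> dot z x = 0 -> qform C z / dot z z <= hi).

Definition restr_eig (k l : nat) (M : 'M[R]_k) (W : 'M[R]_(k, l)) (mu : R) : Prop :=
  exists2 t : 'cV[R]_k, (t != 0) && (W^T *m t == 0) & M *m t = mu *: t.

Definition is_restr_cond (k l : nat) (M : 'M[R]_k) (W : 'M[R]_(k, l)) (kappa : R) : Prop :=
  exists mumin mumax, [/\ restr_eig M W mumin, restr_eig M W mumax,
     (forall mu, restr_eig M W mu -> mumin <= mu <= mumax) & kappa = mumax / mumin].

End Defs.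

From HB Require Import structures.
From mathcomp Require Import all_boot all_order all_algebra.
From mathcomp Require Import ring lra.
Import Order.TTheory GRing.Theory Num.Theory.
Local Open Scope ring_scope.

(* A tangent vector tau = (U_z, V_z^T, S_z) with U^T U_z = 0, V_z^T V = 0 and
   <S, S_z> = 0 is mapped by E to U_z V^T + U V_z^T + U S_z V^T.  Using
   U^T U = V^T V = I, the three summands are mutually orthogonal in the trace
   inner product, orthogonal to x = vec (U S V^T), and have the same norms as
   U_z, V_z^T, S_z; so E is an isometry from {B^T tau = 0} into x^perp, and
   tau^T C_loc tau = z^T C z.  For (ii), write
   z^T A z + R(x) |z|^2 in the eigenbasis of A as sum_i lam_i c_i with
   c_i = a_i^2 |z|^2 + b_i^2 (a, b the coordinates of x, z); by Cauchy-Schwarz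
   against e_i - a_i a, each c_i lies in [0, |z|^2], and they sum to 2 |z|^2,
   so the sum is at least (lam_1 + lam_2) |z|^2. *)

Set Implicit Arguments. Unset Strict Implicit. Unset Printing Implicit Defensive.

Section Vectorization.
Variable R : rcfType.

Lemma split_idx_mxvec p q (i : 'I_p) (j : 'I_q) : split_idx (mxvec_index i j) = (i, j).
Proof. by rewrite /split_idx /mxvec_index cast_ordK enum_rankK. Qed.

Lemma vecE n m (Y : 'M[R]_(n, m)) i j : vec Y (mxvec_index j i) 0 = Y i j.
Proof. by rewrite /vec mxE mxvecE mxE. Qed.

Lemma kronE p1 q1 p2 q2 (P : 'M[R]_(p1, q1)) (Q : 'M[R]_(p2, q2)) i1 i2 j1 j2 :
  kron P Q (mxvec_index i1 i2) (mxvec_index j1 j2) = P i1 j1 * Q i2 j2.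
Proof. by rewrite /kron mxE !split_idx_mxvec. Qed.

Lemma sum_mxvec_index p q (F : 'I_(p * q) -> R) :
  \sum_k F k = \sum_i \sum_j F (mxvec_index i j).
Proof.
by rewrite (reindex _ (curry_mxvec_bij _ _)) pair_bigA; apply: eq_bigr => -[].
Qed.

Lemma mul_kron_vec p1 q1 p2 q2 (P : 'M[R]_(p1, q1)) (Q : 'M[R]_(p2, q2))
    (Y : 'M[R]_(q2, q1)) :
  kron P Q *m vec Y = vec (Q *m Y *m P^T).
Proof.
apply/colP => k; case/mxvec_indexP: k => i1 i2.
rewrite vecE !mxE sum_mxvec_index.
apply: eq_bigr => j1 _; rewrite !mxE mulr_suml; apply: eq_bigr => j2 _.
by rewrite kronE vecE ?mxE; ring.
Qed.

Lemma trmx_kron p1 q1 p2 q2 (P : 'M[R]_(p1, q1)) (Q : 'M[R]_(p2, q2)) :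
  (kron P Q)^T = kron P^T Q^T.
Proof.
apply/matrixP => k l; case/mxvec_indexP: k => i1 i2; case/mxvec_indexP: l => j1 j2.
by rewrite mxE !kronE !mxE.
Qed.

Lemma vecD n m (Y Z : 'M[R]_(n, m)) : vec (Y + Z) = vec Y + vec Z.
Proof. by rewrite /vec !linearD. Qed.

Lemma vec_eq0 n m (Y : 'M[R]_(n, m)) : (vec Y == 0) = (Y == 0).
Proof.
by rewrite /vec trmx_eq0 -(inj_eq (can_inj vec_mxK)) mxvecK linear0 trmx_eq0.
Qed.

Lemma vec_onto n m (v : 'cV[R]_(m * n)) : exists Y : 'M[R]_(n, m), v = vec Y.
Proof. by exists (vec_mx v^T)^T; rewrite /vec trmxK vec_mxK trmxK. Qed.

End Vectorization.

Section DotProduct.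
Variables (R : rcfType) (k : nat).
Implicit Types u v w : 'cV[R]_k.

Lemma dotE u v : dot u v = \sum_i u i 0 * v i 0.
Proof. by rewrite /dot mxE; apply: eq_bigr => i _; rewrite mxE. Qed.

Lemma dotC u v : dot u v = dot v u.
Proof. by rewrite !dotE; apply: eq_bigr => i _; rewrite mulrC. Qed.

Lemma dotDl u v w : dot (u + v) w = dot u w + dot v w.
Proof. by rewrite /dot linearD mulmxDl mxE. Qed.

Lemma dotDr u v w : dot w (u + v) = dot w u + dot w v.
Proof. by rewrite !(dotC w) dotDl. Qed.

Lemma dotZl a u v : dot (a *: u) v = a * dot u v.
Proof. by rewrite /dot linearZ -scalemxAl mxE. Qed.

Lemma dotZr a u v : dot v (a *: u) = a * dot v u.
Proof. by rewrite !(dotC v) dotZl. Qed.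

Lemma dotBl u v w : dot (u - v) w = dot u w - dot v w.
Proof. by rewrite dotDl -scaleN1r dotZl mulN1r. Qed.

Lemma dotBr u v w : dot w (u - v) = dot w u - dot w v.
Proof. by rewrite !(dotC w) dotBl. Qed.

Lemma dot_delta u (i : 'I_k) : dot u (delta_mx i 0) = u i 0.
Proof. by rewrite /dot -colE !mxE. Qed.

Lemma dot_ge0 u : 0 <= dot u u.
Proof. by rewrite dotE; apply: sumr_ge0 => i _; rewrite -expr2 sqr_ge0. Qed.

Lemma dot_self_eq0 u : (dot u u == 0) = (u == 0).
Proof.
apply/eqP/eqP => [|->]; last by rewrite dotE big1 // => i _; rewrite mxE mul0r.
rewrite dotE => /eqP; rewrite psumr_eq0 => [/allP u0|i _]; last first.
  by rewrite -expr2 sqr_ge0.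
apply/colP => i; have /implyP := u0 i (mem_index_enum i).
by rewrite mxE mulf_eq0 orbb => /(_ isT)/eqP.
Qed.

Lemma dot_gt0 u : u != 0 -> 0 < dot u u.
Proof. by rewrite lt_def dot_ge0 dot_self_eq0 andbT. Qed.

Lemma cauchy_schwarz u v : dot u v ^+ 2 <= dot u u * dot v v.
Proof.
have [u0|nz_u] := eqVneq u 0.
  by rewrite u0 /dot !linear0 !mul0mx !mxE expr0n mul0r.
have uu_gt0 := dot_gt0 nz_u.
have := dot_ge0 (dot u u *: v - dot u v *: u).
rewrite !(dotBl, dotBr, dotZl, dotZr) (dotC v u) => H.
have : 0 <= dot u u * (dot u u * dot v v - dot u v ^+ 2) by nra.
by rewrite pmulr_rge0 // subr_ge0.
Qed.

End DotProduct.

Section QuadraticForms.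
Variable R : rcfType.

Lemma dot_col_mx p q (a c : 'cV[R]_p) (b d : 'cV[R]_q) :
  dot (col_mx a b) (col_mx c d) = dot a c + dot b d.
Proof. by rewrite /dot tr_col_mx mul_row_col mxE. Qed.

Lemma dot_vec n m (Y Z : 'M[R]_(n, m)) : dot (vec Y) (vec Z) = \tr (Y^T *m Z).
Proof.
rewrite dotE sum_mxvec_index /mxtrace.
by apply: eq_bigr => j _; rewrite !mxE; apply: eq_bigr => i _; rewrite !vecE !mxE.
Qed.

Lemma dot_trmx_mul k (Q : 'M[R]_k) u v :
  Q *m Q^T = 1%:M -> dot (Q^T *m u) (Q^T *m v) = dot u v.
Proof. by move=> QQt; rewrite /dot trmx_mul trmxK mulmxA -(mulmxA u^T) QQt mulmx1. Qed.

Lemma qform_mulmx k l (C : 'M[R]_k) (E : 'M[R]_(k, l)) t :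
  qform (E^T *m C *m E) t = qform C (E *m t).
Proof. by rewrite /qform trmx_mul !mulmxA. Qed.

Lemma qform_subCmx k (A : 'M[R]_k) c w : qform (A - c%:M) w = qform A w - c * dot w w.
Proof. by rewrite /qform /dot mulmxBr mulmxBl mul_mx_scalar -scalemxAl !mxE. Qed.

Lemma qform_spectral k (Q : 'M[R]_k) (lam : seq R) v :
  qform (Q *m diag_mx (\row_i lam`_i) *m Q^T) v =
  \sum_(i < k) lam`_i * (Q^T *m v) i 0 ^+ 2.
Proof.
rewrite /qform.
have -> : v^T *m (Q *m diag_mx (\row_i lam`_i) *m Q^T) *m v =
    (Q^T *m v)^T *m diag_mx (\row_i lam`_i) *m (Q^T *m v).
  by rewrite trmx_mul trmxK !mulmxA.
by rewrite mxE; apply: eq_bigr => i _; rewrite mul_mx_diag !mxE; ring.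
Qed.

End QuadraticForms.

Section TwoSmallestEigenvalues.
Variable R : rcfType.

Lemma sum_sorted_weights_ge k (lam : seq R) (c : 'I_k -> R) beta :
  (2 <= k)%N -> size lam = k -> sorted <=%R lam ->
  (forall i, 0 <= c i <= beta) -> \sum_i c i = 2 * beta ->
  (lam`_0 + lam`_1) * beta <= \sum_(i < k) lam`_i * c i.
Proof.
move=> k2 sz lam_sorted c_bnd c_sum.
have lam_le i j : (i <= j < k)%N -> lam`_i <= lam`_j.
  case/andP=> ij jk; apply: (sorted_leq_nth le_trans lexx) => //.
    by rewrite inE sz (leq_ltn_trans ij).
  by rewrite inE sz.
pose i0 : 'I_k := Ordinal (ltnW k2).
have lam1_le i : i != i0 -> lam`_1 <= lam`_i.
  move=> ne_i; apply: lam_le; rewrite ltn_ord andbT lt0n.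
  by apply: contra ne_i => /eqP i0E; apply/eqP/val_inj.
have tail_ge : lam`_1 * (2 * beta - c i0) <= \sum_(i | i != i0) lam`_i * c i.
  rewrite -c_sum (bigD1 i0) //= addrAC subrr add0r mulr_sumr.
  by apply: ler_sum => i ne_i; rewrite ler_wpM2r ?lam1_le //; case/andP: (c_bnd i).
have lam01 : lam`_0 <= lam`_1 by apply: lam_le; rewrite k2.
rewrite (bigD1 i0) //=; case/andP: (c_bnd i0) => c0_ge0 c0_le; nra.
Qed.

Lemma unit_orth_weight_bounds k (a b : 'cV[R]_k) i :
  dot a a = 1 -> dot a b = 0 -> 0 <= a i 0 ^+ 2 * dot b b + b i 0 ^+ 2 <= dot b b.
Proof.
move=> aa1 ab0; have bb_ge0 := dot_ge0 b.
have := cauchy_schwarz b (delta_mx i 0 - a i 0 *: a).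
rewrite !(dotBl, dotBr, dotZl, dotZr) !dot_delta (dotC b a) (dotC _ a) dot_delta.
rewrite ab0 aa1 mxE eqxx /= => CS.
by apply/andP; split; [have := sqr_ge0 (a i 0); have := sqr_ge0 (b i 0)|]; nra.
Qed.

Lemma qform_shift_orth_ge k (A Q : 'M[R]_k) (lam : seq R) x w :
  (2 <= k)%N -> size lam = k -> sorted <=%R lam -> Q^T *m Q = 1%:M ->
  A = Q *m diag_mx (\row_i lam`_i) *m Q^T -> dot x x = 1 -> dot w x = 0 ->
  (lam`_0 + lam`_1 - 2 * qform A x) * dot w w <= qform (A - (qform A x)%:M) w.
Proof.
move=> k2 sz lam_sorted QtQ ->; have QQt : Q *m Q^T = 1%:M by apply: mulmx1C.
rewrite qform_subCmx !qform_spectral -(dot_trmx_mul _ w QQt).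
rewrite -(dot_trmx_mul _ x QQt) -(dot_trmx_mul w x QQt) dotC.
set a := Q^T *m x; set b := Q^T *m w => aa1 ab0.
pose c i := a i 0 ^+ 2 * dot b b + b i 0 ^+ 2.
have c_sum : \sum_i c i = 2 * dot b b.
  rewrite big_split /= -mulr_suml.
  have sq_sum (u : 'cV[R]_k) : \sum_i u i 0 ^+ 2 = dot u u.
    by rewrite dotE; apply: eq_bigr => i _; rewrite expr2.
  by rewrite !sq_sum aa1 mul1r mulr2n mulrDl mul1r.
have c_bnd i := unit_orth_weight_bounds i aa1 ab0.
have := sum_sorted_weights_ge k2 sz lam_sorted c_bnd c_sum.
rewrite /c; under eq_bigr do rewrite mulrDr mulrA.
by rewrite big_split /= -mulr_suml; lra.
Qed.

End TwoSmallestEigenvalues.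

Section TangentMap.
Variables (R : rcfType) (n m r : nat) (U : 'M[R]_(n, r)) (V : 'M[R]_(m, r)).

Definition tangent_map : 'M[R]_(m * n, (r * n + m * r) + r * r) :=
  row_mx (row_mx (kron V (1%:M : 'M[R]_n)) (kron (1%:M : 'M[R]_m) U)) (kron V U).

Definition tangent_constraint (S : 'M[R]_r) :
    'M[R]_((r * n + m * r) + r * r, (r * r + r * r) + 1) :=
  block_mx (block_mx (kron (1%:M : 'M[R]_r) U) 0 0 (kron V (1%:M : 'M[R]_r))) 0 0 (vec S).

Lemma mul_tangent_map (Uz : 'M[R]_(n, r)) (Vzt : 'M[R]_(r, m)) (Sz : 'M[R]_r) :
  tangent_map *m col_mx (col_mx (vec Uz) (vec Vzt)) (vec Sz) =
  vec (Uz *m V^T + U *m Vzt + U *m Sz *m V^T).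
Proof. by rewrite !mul_row_col !mul_kron_vec mul1mx trmx1 mulmx1 !vecD. Qed.

Lemma mul_tr_tangent_constraint S (Uz : 'M[R]_(n, r)) (Vzt : 'M[R]_(r, m))
    (Sz : 'M[R]_r) :
  (tangent_constraint S)^T *m col_mx (col_mx (vec Uz) (vec Vzt)) (vec Sz) =
  col_mx (col_mx (vec (U^T *m Uz)) (vec (Vzt *m V))) ((vec S)^T *m vec Sz).
Proof.
rewrite !tr_block_mx !linear0 !mul_block_col !mul0mx !addr0 !add0r.
by rewrite !trmx_kron !mul_kron_vec !trmxK trmx1 mulmx1 mul1mx.
Qed.

Hypotheses (UtU : U^T *m U = 1%:M) (VtV : V^T *m V = 1%:M).

Lemma mxtrace_conjV (M : 'M[R]_r) : \tr (V *m M *m V^T) = \tr M.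
Proof. by rewrite mxtrace_mulC mulmxA VtV mul1mx. Qed.

Section TangentVector.
Variables (S : 'M[R]_r) (Uz : 'M[R]_(n, r)) (Vzt : 'M[R]_(r, m)) (Sz : 'M[R]_r).
Hypotheses (UtUz : U^T *m Uz = 0) (VztV : Vzt *m V = 0) (SzS : \tr (Sz^T *m S) = 0).

Let Z1 := Uz *m V^T.
Let Z2 := U *m Vzt.
Let Z3 := U *m Sz *m V^T.

Let UztU : Uz^T *m U = 0.
Proof. by rewrite -(trmxK U) -trmx_mul UtUz linear0. Qed.

Lemma tangent_vec_orth : dot (vec (Z1 + Z2 + Z3)) (vec (U *m S *m V^T)) = 0.
Proof.
rewrite !vecD !dotDl !dot_vec /Z1 /Z2 /Z3 !trmx_mul !trmxK !mulmxA.
rewrite -(mulmxA V Uz^T U) UztU mulmx0 !mul0mx linear0 add0r.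
rewrite -(mulmxA Vzt^T U^T U) -(mulmxA (V *m Sz^T) U^T U) UtU !mulmx1.
rewrite -(mulmxA V Sz^T S) mxtrace_conjV SzS addr0 mxtrace_mulC mulmxA.
by rewrite -trmx_mul VztV linear0 mul0mx linear0.
Qed.

Lemma tangent_vec_norm : dot (vec (Z1 + Z2 + Z3)) (vec (Z1 + Z2 + Z3)) =
  dot (vec Uz) (vec Uz) + dot (vec Vzt) (vec Vzt) + dot (vec Sz) (vec Sz).
Proof.
have n11 : dot (vec Z1) (vec Z1) = dot (vec Uz) (vec Uz).
  by rewrite !dot_vec /Z1 trmx_mul trmxK !mulmxA -(mulmxA V) mxtrace_conjV.
have n22 : dot (vec Z2) (vec Z2) = dot (vec Vzt) (vec Vzt).
  by rewrite !dot_vec /Z2 trmx_mul -mulmxA (mulmxA U^T) UtU mul1mx.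
have n33 : dot (vec Z3) (vec Z3) = dot (vec Sz) (vec Sz).
  rewrite !dot_vec /Z3 !trmx_mul trmxK !mulmxA.
  by rewrite -(mulmxA (V *m Sz^T) U^T U) UtU mulmx1 -(mulmxA V Sz^T Sz) mxtrace_conjV.
have o12 : dot (vec Z1) (vec Z2) = 0.
  rewrite dot_vec /Z1 /Z2 !trmx_mul trmxK !mulmxA.
  by rewrite -(mulmxA V Uz^T U) UztU mulmx0 mul0mx linear0.
have o13 : dot (vec Z1) (vec Z3) = 0.
  rewrite dot_vec /Z1 /Z3 !trmx_mul trmxK !mulmxA.
  by rewrite -(mulmxA V Uz^T U) UztU mulmx0 !mul0mx linear0.
have o23 : dot (vec Z2) (vec Z3) = 0.
  rewrite dot_vec /Z2 /Z3 !trmx_mul !mulmxA -(mulmxA Vzt^T U^T U) UtU mulmx1.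
  by rewrite mxtrace_mulC mulmxA -trmx_mul VztV linear0 mul0mx linear0.
rewrite !vecD !(dotDl, dotDr) n11 n22 n33 o12 o13 o23.
by rewrite (dotC (vec Z2)) o12 (dotC (vec Z3)) o13 (dotC (vec Z3)) o23 !addr0 !add0r.
Qed.

End TangentVector.

Lemma tangent_map_isometry S tau : (tangent_constraint S)^T *m tau = 0 ->
  dot (tangent_map *m tau) (vec (U *m S *m V^T)) = 0 /\
  dot (tangent_map *m tau) (tangent_map *m tau) = dot tau tau.
Proof.
rewrite -[tau]vsubmxK -[usubmx tau]vsubmxK.
have [Uz ->] := vec_onto (usubmx (usubmx tau)).
have [Vzt ->] := vec_onto (dsubmx (usubmx tau)).
have [Sz ->] := vec_onto (dsubmx tau).
rewrite mul_tr_tangent_constraint mul_tangent_map => /eqP.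
rewrite !col_mx_eq0 !vec_eq0 => /andP[/andP[/eqP UtUz /eqP VztV] /eqP SSz].
have SzS : \tr (Sz^T *m S) = 0 by rewrite -dot_vec dotC /dot SSz mxE.
by rewrite !dot_col_mx tangent_vec_orth ?tangent_vec_norm.
Qed.

End TangentMap.

Section RestrictedRayleighQuotients.
Variable R : rcfType.

Lemma rayleigh_isometry_bounds k l (C : 'M[R]_k) (x : 'cV[R]_k) (E : 'M[R]_(k, l))
    lo hi t :
  t != 0 -> dot (E *m t) x = 0 -> dot (E *m t) (E *m t) = dot t t ->
  is_min_rq C x lo -> is_max_rq C x hi ->
  lo <= qform (E^T *m C *m E) t / dot t t <= hi.
Proof.
move=> nz_t Etx Ett [_ lo_le] [_ le_hi].
have nz_Et : E *m t != 0 by rewrite -dot_self_eq0 Ett dot_self_eq0.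
by rewrite qform_mulmx -Ett lo_le ?le_hi.
Qed.

Lemma min_rq_gt0 k (C : 'M[R]_k) (x : 'cV[R]_k) lo c : 0 < c ->
  (forall w, dot w x = 0 -> c * dot w w <= qform C w) -> is_min_rq C x lo -> 0 < lo.
Proof.
move=> c_gt0 C_ge [[z /andP[nz_z /eqP zx] <-] _].
apply: divr_gt0 (dot_gt0 nz_z); apply: lt_le_trans (C_ge z zx).
exact: mulr_gt0 (dot_gt0 nz_z).
Qed.

Lemma qform_proj_orth k l (M : 'M[R]_k) (W : 'M[R]_(k, l)) t : W^T *m t = 0 ->
  qform ((1%:M - W *m W^T) *m M *m (1%:M - W *m W^T)) t = qform M t.
Proof.
move=> Wt; set P := 1%:M - W *m W^T.
have Pt : P *m t = t by rewrite mulmxBl mul1mx -mulmxA Wt mulmx0 subr0.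
have Psym : P^T = P by rewrite linearB /= trmx1 trmx_mul trmxK.
have tP : t^T *m P = t^T by rewrite -[t^T *m P]trmxK trmx_mul trmxK Psym Pt.
by rewrite /qform -!mulmxA Pt !mulmxA tP.
Qed.

Lemma restr_cond_le k l (M : 'M[R]_k) (W : 'M[R]_(k, l)) lo hi kappa : 0 < lo ->
  (forall t, t != 0 -> W^T *m t = 0 -> lo <= qform M t / dot t t <= hi) ->
  is_restr_cond M W kappa -> kappa <= hi / lo.
Proof.
move=> lo_gt0 rq [mumin [mumax [emin emax _ ->]]].
have eig_bnd mu : restr_eig M W mu -> lo <= mu <= hi.
  case=> t /andP[nz_t /eqP Wt] Mt; have := rq t nz_t Wt.
  rewrite /qform -mulmxA Mt -scalemxAr mxE -/(dot t t).
  by rewrite mulfK // lt0r_neq0 // dot_gt0.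
case/andP: (eig_bnd _ emin) => lo_le _; case/andP: (eig_bnd _ emax) => mumax_ge le_hi.
have mumin_gt0 := lt_le_trans lo_gt0 lo_le.
have hi_gt0 := lt_le_trans lo_gt0 (le_trans mumax_ge le_hi).
apply: (le_trans (y := hi / mumin)); first by rewrite ler_wpM2r // invr_ge0 ltW.
apply: ler_wpM2l; first exact: ltW.
by rewrite lef_pV2 ?posrE.
Qed.

End RestrictedRayleighQuotients.

Unset Implicit Arguments. Set Strict Implicit. Set Printing Implicit Defensive.

Theorem mainTheorem4 (R : rcfType) (n m r : nat)
    (A : 'M[R]_(m * n)) (lam : seq R) (Q : 'M[R]_(m * n))
    (X : 'M[R]_(n, m)) (U : 'M[R]_(n, r)) (V : 'M[R]_(m, r)) (s : 'rV[R]_r) :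
  (2 <= m * n)%N ->
  A^T = A ->
  (* lam = eigenvalues of A in nondecreasing order *)
  size lam = (m * n)%N -> sorted <=%R lam ->
  Q^T *m Q = 1%:M -> A = Q *m diag_mx (\row_i lam`_i) *m Q^T ->
  (* thin SVD X = U S V^T and ||vec X|| = 1 *)
  vnorm (vec X) = 1 ->
  U^T *m U = 1%:M -> V^T *m V = 1%:M ->
  (forall i, 0 < s 0 i) ->
  X = U *m diag_mx s *m V^T ->
  let x := vec X in
  let S := diag_mx s in
  let Rx := qform A x in
  let C := A - Rx%:M in
  let E : 'M[R]_(m * n, (r * n + m * r) + r * r) :=
    row_mx (row_mx (kron V (1%:M : 'M[R]_n)) (kron (1%:M : 'M[R]_m) U)) (kron V U) in
  let Cloc := E^T *m C *m E in
  let B : 'M[R]_((r * n + m * r) + r * r, (r * r + r * r) + 1) :=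
    block_mx (block_mx (kron (1%:M : 'M[R]_r) U) 0 0 (kron V (1%:M : 'M[R]_r))) 0 0 (vec S) in
  let lam1 := lam`_0 in
  let lam2 := lam`_1 in
  (forall tau : 'cV[R]_((r * n + m * r) + r * r), tau != 0 -> B^T *m tau = 0 ->
     let z := E *m tau in
     (* (i) *)
     [/\ z != 0, dot z x = 0, vnorm z = vnorm tau, qform Cloc tau = qform C z
       & forall lo hi, is_min_rq C x lo -> is_max_rq C x hi ->
           lo <= qform Cloc tau / dot tau tau <= hi]
     (* (ii) *)
     /\ (lam1 + lam2 - 2 * Rx) * dot tau tau <= qform Cloc tau) /\
  (Rx < (lam1 + lam2) / 2 ->
     (forall tau : 'cV[R]_((r * n + m * r) + r * r), tau != 0 -> B^T *m tau = 0 ->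
        0 < qform Cloc tau) /\
     (forall lo hi kappa, is_min_rq C x lo -> is_max_rq C x hi ->
        is_restr_cond ((1%:M - B *m B^T) *m Cloc *m (1%:M - B *m B^T)) B kappa ->
        kappa <= hi / lo)).
Proof.
move=> mn2 _ sz lam_sorted QtQ A_spec x_norm UtU VtV _ X_svd x S Rx C E Cloc B lam1 lam2.
have xx1 : dot x x = 1 by rewrite -(sqr_sqrtr (dot_ge0 x)) -/(vnorm x) x_norm expr1n.
have C_ge w : dot w x = 0 -> (lam1 + lam2 - 2 * Rx) * dot w w <= qform C w.
  exact: qform_shift_orth_ge mn2 sz lam_sorted QtQ A_spec xx1.
have iso tau : B^T *m tau = 0 ->
    dot (E *m tau) x = 0 /\ dot (E *m tau) (E *m tau) = dot tau tau.
  by rewrite /x X_svd; exact: tangent_map_isometry.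
have Cloc_ge tau : B^T *m tau = 0 ->
    (lam1 + lam2 - 2 * Rx) * dot tau tau <= qform Cloc tau.
  by move=> /iso[Ex Etau]; rewrite qform_mulmx -Etau C_ge.
split=> [tau nz_tau Btau z | Rx_lt].
  have [Ex Etau] := iso tau Btau; split; last exact: Cloc_ge.
  split=> //; first by rewrite -dot_self_eq0 Etau dot_self_eq0.
  - by rewrite /vnorm Etau.
  - exact: qform_mulmx.
  - by move=> lo hi; exact: rayleigh_isometry_bounds.
have gap_gt0 : 0 < lam1 + lam2 - 2 * Rx by lra.
split=> [tau nz_tau /Cloc_ge | lo hi kappa lo_min hi_max].
  by apply: lt_le_trans; rewrite mulr_gt0 ?dot_gt0.
apply: restr_cond_le (min_rq_gt0 gap_gt0 C_ge lo_min) _ => t nz_t.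
move=> /[dup] Bt /iso[Ex Et]; rewrite qform_proj_orth //.
exact: (rayleigh_isometry_bounds nz_t Ex Et lo_min hi_max).
Qed.
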